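(* Let $U$ and $V$ be real vector spaces and let $f:V^m\to\mathbb{R}\oplus U$ be an $m$-linear map. Assume there exist $x_1,\dots,x_m,y_1,\dots,y_m\in V$ such that $f(x_1,\dots,x_m)\in\mathbb{R}\setminus\{0\}$ and $f(y_1,\dots,y_m)\notin\mathbb{R}$. Then there exist an index $i\in\{1,\dots,m\}$ and vectors $r_1,\dots,r_m,r_i^*\in V$ such that \[ f(r_1,\dots,r_m)=1\quad\text{and}\quad f(r_1,\dots,r_{i-1},r_i^*,r_{i+1},\dots,r_m)\notin\mathbb{R}. \]
   Context: $\mathbb{R}$ is identified with the summand $\mathbb{R}\oplus 0\subseteq\mathbb{R}\oplus U$. *)

From HB Require Import structures.
From mathcomp Require Import all_boot all_order all_algebra.
From mathcomp Require Export reals.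
Set Implicit Arguments. Unset Strict Implicit. Unset Printing Implicit Defensive.
Import Order.TTheory GRing.Theory Num.Theory.
Local Open Scope ring_scope.

Definition upd (V : Type) (m : nat) (x : {ffun 'I_m -> V}) (i : 'I_m) (v : V)
  : {ffun 'I_m -> V} := [ffun j => if j == i then v else x j].

Definition multilinear (R : realType) (V W : lmodType R) (m : nat)
  (f : {ffun 'I_m -> V} -> W) : Prop :=
  forall (x : {ffun 'I_m -> V}) (i : 'I_m) (a : R) (u v : V),
    f (upd x i (a *: u + v)) = a *: f (upd x i u) + f (upd x i v).

(* The direct sum R (+) U, with R identified with R (+) 0. *)
Definition dsum (R : realType) (U : lmodType R) := (R^o * U)%type.

Definition in_R (R : realType) (U : lmodType R) (w : dsum U) : Prop := w.2 = 0.

From mathcomp Require Import all_boot all_order all_algebra.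
From Stdlib Require Import Classical.
Set Implicit Arguments. Unset Strict Implicit. Unset Printing Implicit Defensive.
Import GRing.Theory Num.Theory.
Local Open Scope ring_scope.

(* Argue by contraposition: assume that no single-coordinate change of a point
   r with f r = 1 leaves R. Rescaling one coordinate extends this to every r
   with f r in R \ {0}; fix such an x. By induction on k, f z lies in R for
   every z agreeing with x in the coordinates >= k: multilinearity in
   coordinate k gives
     f (.., t x_k + z_k, ..) = t f (.., x_k, ..) + f (.., z_k, ..),
   and t can be chosen so that x[k := t x_k + z_k] has value 1, which puts the
   left-hand side under the induction hypothesis as well. For k = m this says
   that f takes all its values in R. *)

Lemma upd_id (V : Type) (m : nat) (x : {ffun 'I_m -> V}) i : upd x i (x i) = x.
Proof. by apply/ffunP => j; rewrite ffunE; case: eqP => // ->. Qed.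

Lemma upd_upd (V : Type) (m : nat) (x : {ffun 'I_m -> V}) i a b :
  upd (upd x i a) i b = upd x i b.
Proof. by apply/ffunP => j; rewrite !ffunE; case: eqP. Qed.

Lemma upd_agree_from (V : Type) (m : nat) (u b : {ffun 'I_m -> V}) (i : 'I_m) a :
    (forall j : 'I_m, (i < j)%N -> u j = b j) ->
  forall j : 'I_m, (i <= j)%N -> upd u i a j = upd b i a j.
Proof.
move=> ub j le_ij; rewrite !ffunE; case: eqP => // /eqP ne_ji; apply: ub.
by rewrite ltn_neqAle le_ij andbT eq_sym; apply: contra ne_ji => /eqP/val_inj ->.
Qed.

Section RealPart.
Variables (R : realType) (U : lmodType R).
Implicit Types (p q : dsum U) (a : R).

Lemma in_R_pairE p : in_R p -> p = (p.1, 0).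
Proof. by case: p => c u; rewrite /in_R /= => ->. Qed.

Lemma in_RD p q : in_R p -> in_R q -> in_R (p + q).
Proof. by rewrite /in_R /= => -> ->; rewrite addr0. Qed.

Lemma in_RZ a p : in_R p -> in_R (a *: p).
Proof. by rewrite /in_R /= => ->; rewrite scaler0. Qed.

End RealPart.

Section Multilinear.
Variables (R : realType) (U V : lmodType R) (m : nat).
Variable f : {ffun 'I_m -> V} -> dsum U.
Hypothesis f_ml : multilinear f.

Lemma multilinear_upd0 x i : f (upd x i 0) = 0.
Proof.
have := f_ml x i 1 0 0; rewrite scale1r addr0 scale1r => f0_double.
by apply: (addrI (f (upd x i 0))); rewrite -f0_double addr0.
Qed.

Lemma multilinear_updZ x i a : f (upd x i (a *: x i)) = a *: f x.
Proof. by have := f_ml x i a (x i) 0; rewrite !addr0 multilinear_upd0 addr0 upd_id. Qed.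

Hypothesis unit_updates_real :
  forall r i v, f r = (1, 0) -> in_R (f (upd r i v)).

Lemma nonzero_updates_real w i v :
  in_R (f w) -> (f w).1 != 0 -> in_R (f (upd w i v)).
Proof.
move=> w_real w_nz; rewrite -(upd_upd w i ((f w).1^-1 *: w i)).
apply: unit_updates_real; rewrite multilinear_updZ {2}(in_R_pairE w_real).
by congr (_, _); [exact: mulVf | rewrite scaler0].
Qed.

Lemma real_on_tail k : (k <= m)%N ->
  forall x, in_R (f x) -> (f x).1 != 0 ->
  forall z : {ffun 'I_m -> V}, (forall j : 'I_m, (k <= j)%N -> z j = x j) ->
  in_R (f z).
Proof.
elim: k => [|k IHk] lt_km x x_real x_nz z zx.
  by have -> : z = x by apply/ffunP => j; apply: zx.
pose k' := Ordinal lt_km.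
pose c := (f x).1; pose a := (f (upd x k' (z k'))).1; pose t := (1 - a) / c.
have x_shift_unit : f (upd x k' (t *: x k' + z k')) = (1, 0).
  rewrite f_ml upd_id (in_R_pairE x_real).
  rewrite (in_R_pairE (nonzero_updates_real _ _ x_real x_nz)).
  congr (_, _); last by rewrite /= scaler0 addr0.
  by rewrite /= -/c -/a -[t *: c]/(t * c : R) divfK ?subrK.
have z_xk_real : in_R (f (upd z k' (x k'))).
  apply: (IHk (ltnW lt_km) x) => //.
  by have := upd_agree_from (i := k') (x k') zx; rewrite upd_id.
have z_shift_real : in_R (f (upd z k' (t *: x k' + z k'))).
  apply: (IHk (ltnW lt_km) (upd x k' (t *: x k' + z k'))).
  - by rewrite x_shift_unit.
  - by rewrite x_shift_unit oner_eq0.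
  - exact: (upd_agree_from (i := k') _ zx).
have -> : f z = f (upd z k' (t *: x k' + z k')) + (- t) *: f (upd z k' (x k')).
  by rewrite f_ml upd_id addrAC scaleNr subrr add0r.
exact: in_RD z_shift_real (in_RZ _ z_xk_real).
Qed.

Lemma real_everywhere x : in_R (f x) -> (f x).1 != 0 -> forall z, in_R (f z).
Proof.
move=> x_real x_nz z; apply: (real_on_tail (leqnn m) x_real x_nz) => j.
by rewrite leqNgt ltn_ord.
Qed.

End Multilinear.

Theorem mainTheorem11 (R : realType) (U V : lmodType R) (m : nat)
  (f : {ffun 'I_m -> V} -> dsum U) :
  multilinear f ->
  (exists x : {ffun 'I_m -> V}, in_R (f x) /\ (f x).1 <> 0) ->
  (exists y : {ffun 'I_m -> V}, ~ in_R (f y)) ->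
  exists (i : 'I_m) (r : {ffun 'I_m -> V}) (rstar : V),
    f r = ((1 : R), (0 : U)) /\ ~ in_R (f (upd r i rstar)).
Proof.
move=> f_ml [x [x_real /eqP x_nz]] [y y_not_real].
apply: NNPP => no_witness; apply: y_not_real.
apply: (real_everywhere f_ml _ x_real x_nz y) => r i v r_unit.
by apply: NNPP => v_not_real; apply: no_witness; exists i, r, v.
Qed.
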